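(* Let $\mathbf{p}_0,\ldots,\mathbf{p}_d\in\mathbb{R}^d$ be $d+1$ points not contained in any $(d-1)$-dimensional affine subspace, let $\lambda_0,\ldots,\lambda_d\in(0,1)$, and let $S_i(\mathbf{x})=\lambda_i\mathbf{x}+(1-\lambda_i)\mathbf{p}_i$ for $i=0,\ldots,d$. If $\sum_{i=0}^d\lambda_i\ge d$, then the unique non-empty compact set $X$ with $X=\bigcup_{i=0}^dS_i(X)$ equals the convex hull $\mathrm{conv}(\{\mathbf{p}_0,\ldots,\mathbf{p}_d\})$. *)

From HB Require Import structures.
From mathcomp Require Import all_boot all_order all_algebra.
From mathcomp Require Import all_classical all_reals all_analysis.
Set Implicit Arguments. Unset Strict Implicit. Unset Printing Implicit Defensive.
Import Order.TTheory GRing.Theory Num.Theory.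
Import numFieldNormedType.Exports.
Local Open Scope ring_scope.
Local Open Scope classical_set_scope.

(* The points p_0,...,p_d are not contained in any (d-1)-dimensional affine
   subspace, i.e. in no affine hyperplane {x | <a,x> = c} with a <> 0. *)
Definition not_in_hyperplane (R : realType) (d : nat) (p : 'I_d.+1 -> 'rV[R]_d) : Prop :=
  ~ exists (a : 'rV[R]_d) (c : R), a != 0 /\
      forall i, \sum_(k < d) a ord0 k * p i ord0 k = c.

Definition conv_hull (R : realType) (d n : nat) (p : 'I_n -> 'rV[R]_d) : set 'rV[R]_d :=
  [set x | exists t : 'I_n -> R, (forall i, 0 <= t i) /\ \sum_(i < n) t i = 1 /\
                                 x = \sum_(i < n) t i *: p i].

Definition Smap (R : realType) (d : nat) (lam : R) (q : 'rV[R]_d) (x : 'rV[R]_d) : 'rV[R]_d :=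
  lam *: x + (1 - lam) *: q.

(* Each S_i maps the simplex conv{p_0, ..., p_d} into itself.  Conversely, since
   sum_i (1 - lambda_i) = d + 1 - sum_i lambda_i <= 1 = sum_i t_i, every point with
   barycentric coordinates t has t_i >= 1 - lambda_i for some i, and removing the
   mass 1 - lambda_i from the i-th coordinate writes it as S_i of a point of the
   simplex; so the simplex is a compact invariant set.  For uniqueness: if A is
   closed, non-empty and mapped into itself by contractions f_i, and B is bounded
   with B included in the union of the f_i(B), then s = sup_{b in B} dist(b, A)
   satisfies s <= (max ratio) * s, so s = 0 and B is included in A.  Applying this
   to (A, B) = (simplex, X) and to (X, simplex) gives X = simplex. *)

From HB Require Import structures.
From mathcomp Require Import all_boot all_order all_algebra.
From mathcomp Require Import all_classical all_reals all_analysis.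
From mathcomp Require Import lra.
Import Order.TTheory GRing.Theory Num.Theory.
Import numFieldNormedType.Exports.
Local Open Scope ring_scope.
Local Open Scope classical_set_scope.
Set Implicit Arguments. Unset Strict Implicit.

Section distance_to_a_set.
Variables (R : realType) (V : normedModType R) (A : set V).
Hypothesis A_neq0 : A !=set0.

Definition dist_set (x : V) : R := inf [set `|x - a| | a in A].

Let dists_neq0 x : [set `|x - a| | a in A] !=set0.
Proof. by case: A_neq0 => a Aa; exists `|x - a|, a. Qed.

Let dists_lb x : has_lbound [set `|x - a| | a in A].
Proof. by exists 0 => _ [a _ <-]. Qed.

Lemma dist_set_le x a : A a -> dist_set x <= `|x - a|.
Proof. by move=> Aa; apply: (ge_inf (dists_lb x)); exists a. Qed.

Lemma dist_set_ge0 x : 0 <= dist_set x.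
Proof. by apply: lb_le_inf (dists_neq0 x) _ => _ [a _ <-]. Qed.

Lemma dist_set_contract (f : V -> V) (k : R) x :
  0 < k -> (forall y z, `|f y - f z| <= k * `|y - z|) -> f @` A `<=` A ->
  dist_set (f x) <= k * dist_set x.
Proof.
move=> k_gt0 f_lip fA; rewrite -ler_pdivrMl //.
apply: lb_le_inf (dists_neq0 x) _ => _ [a Aa <-].
rewrite ler_pdivrMl //; apply: le_trans (f_lip x a).
by apply: dist_set_le; apply: fA; exists a.
Qed.

Lemma dist_set_eq0 x : closed A -> dist_set x = 0 -> A x.
Proof.
move=> A_closed dx0; apply: A_closed => U /nbhs_ballP [e e_gt0 eU].
have /(inf_lt (dists_neq0 x)) [_ [a Aa <-] xa_lt_e] :
    inf [set `|x - a| | a in A] < e by rewrite -/(dist_set x) dx0.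
by exists a; split => //; apply: eU; rewrite -ball_normE.
Qed.

Lemma dist_set_bounded B : bounded_set B -> has_ubound (dist_set @` B).
Proof.
case: A_neq0 => a Aa [M [_ BM]]; exists (M + 1 + `|a|) => _ [b Bb <-].
apply: le_trans (dist_set_le b Aa) _; apply: le_trans (ler_normB _ _) _.
by rewrite lerD2r BM // ltrDl.
Qed.

End distance_to_a_set.

Lemma self_covered_sub_invariant (R : realType) (V : normedModType R) (n : nat)
    (f : 'I_n -> V -> V) (k : 'I_n -> R) (A B : set V) :
  (forall i, 0 < k i < 1) -> (forall i x y, `|f i x - f i y| <= k i * `|x - y|) ->
  closed A -> A !=set0 -> (forall i, f i @` A `<=` A) ->
  bounded_set B -> B `<=` \bigcup_(i in [set: 'I_n]) (f i @` B) ->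
  B `<=` A.
Proof.
move=> k01 f_lip A_closed A_neq0 fA B_bounded B_cover b Bb.
apply: (dist_set_eq0 A_neq0 A_closed).
pose kmax := \big[Order.max/0]_i k i.
have kmax_lt1 : kmax < 1.
  by apply/bigmax_ltP; split => // i _; case/andP: (k01 i).
pose s := sup (dist_set A @` B).
have dist_le_s c : B c -> dist_set A c <= s.
  by move=> Bc; apply: (ub_le_sup (dist_set_bounded A_neq0 B_bounded)); exists c.
have s_ge0 : 0 <= s := le_trans (dist_set_ge0 A_neq0 b) (dist_le_s b Bb).
have s_le_kmax_s : s <= kmax * s.
  apply: ge_sup; first by exists (dist_set A b), b.
  move=> _ [c /B_cover [i _ [c' Bc' <-]] <-].
  have /andP[ki_gt0 _] := k01 i.
  apply: le_trans (dist_set_contract A_neq0 _ ki_gt0 (f_lip i) (fA i)) _.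
  apply: le_trans (ler_wpM2l (ltW ki_gt0) (dist_le_s c' Bc')) _.
  by rewrite ler_wpM2r // le_bigmax.
apply/eqP; rewrite eq_le dist_set_ge0 // andbT.
apply: le_trans (dist_le_s b Bb) _; nra.
Qed.

Lemma Smap_dist (R : realType) (d : nat) (l : R) (q x y : 'rV[R]_d) :
  0 <= l -> `|Smap l q x - Smap l q y| = l * `|x - y|.
Proof.
move=> l_ge0; rewrite /Smap opprD addrACA subrr addr0 -scalerBr normrZ.
by rewrite ger0_norm.
Qed.

Lemma sumr_indicator (R : pzRingType) (n : nat) (i : 'I_n) (c : R) :
  \sum_(k < n) (k == i)%:R * c = c.
Proof.
rewrite (bigD1 i) //= eqxx mul1r big1 ?addr0 // => k /negbTE ->.
by rewrite mul0r.
Qed.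

Lemma sumr_indicatorZ (R : pzRingType) (V : lmodType R) (n : nat) (i : 'I_n)
    (c : R) (v : 'I_n -> V) :
  \sum_(k < n) ((k == i)%:R * c) *: v k = c *: v i.
Proof.
rewrite (bigD1 i) //= eqxx mul1r big1 ?addr0 // => k /negbTE ->.
by rewrite mul0r scale0r.
Qed.

Lemma exists_le_of_sum_le (R : realDomainType) (n : nat) (s t : 'I_n.+1 -> R) :
  \sum_(i < n.+1) s i <= \sum_(i < n.+1) t i -> exists i, s i <= t i.
Proof.
move=> st; apply/not_existsP => s_gt_t.
suff : \sum_(i < n.+1) t i < \sum_(i < n.+1) s i by rewrite ltNge st.
apply: ltr_sum; first by apply/hasP; exists ord0; rewrite ?mem_index_enum.
by move=> i _; rewrite ltNge; apply/negP => /s_gt_t.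
Qed.

Section convex_hull.
Variables (R : realType) (d n : nat) (p : 'I_n -> 'rV[R]_d).

Lemma conv_hull_vertex i : conv_hull p (p i).
Proof.
exists (fun k => (k == i)%:R * 1); split; [|split].
- by move=> k; rewrite mulr1 ler0n.
- exact: sumr_indicator.
- by rewrite sumr_indicatorZ scale1r.
Qed.

Lemma conv_hull_Smap l i x :
  0 <= l <= 1 -> conv_hull p x -> conv_hull p (Smap l (p i) x).
Proof.
move=> /andP[l_ge0 l_le1] [t [t_ge0 [t_sum1 ->]]].
exists (fun k => l * t k + (k == i)%:R * (1 - l)); split; [|split].
- by move=> k; rewrite addr_ge0 ?mulr_ge0 ?subr_ge0.
- by rewrite big_split /= -mulr_sumr t_sum1 mulr1 sumr_indicator addrC subrK.
- rewrite /Smap scaler_sumr -(sumr_indicatorZ i (1 - l) p) -big_split /=.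
  by apply: eq_bigr => k _; rewrite scalerDl scalerA.
Qed.

Lemma conv_hull_Smap_inv l i (t : 'I_n -> R) :
  0 < l -> (forall k, 0 <= t k) -> \sum_(k < n) t k = 1 -> 1 - l <= t i ->
  exists2 y, conv_hull p y & \sum_(k < n) t k *: p k = Smap l (p i) y.
Proof.
move=> l_gt0 t_ge0 t_sum1 ti_ge.
have l_neq0 : l != 0 by rewrite gt_eqF.
pose t' k := (t k - (k == i)%:R * (1 - l)) / l.
exists (\sum_(k < n) t' k *: p k).
  exists t'; split; [|split] => //.
  - move=> k; apply: divr_ge0; last exact: ltW.
    by case: eqP => [->|_]; rewrite /= ?mul1r ?mul0r ?subr_ge0 ?subr0.
  - by rewrite -mulr_suml sumrB t_sum1 sumr_indicator opprB addrC subrK divff.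
rewrite /Smap scaler_sumr -[in RHS](sumr_indicatorZ i (1 - l) p) -big_split /=.
apply: eq_bigr => k _.
by rewrite /t' scalerA mulrCA divff // mulr1 -scalerDl subrK.
Qed.

Lemma conv_hull_compact : compact (conv_hull p).
Proof.
pose simplex := [set t : 'rV[R]_n | forall i, `[0, 1] (t ord0 i)] `&`
                (fun t : 'rV[R]_n => \sum_(i < n) t ord0 i) @^-1` [set 1].
pose comb (t : 'rV[R]_n) := \sum_(i < n) t ord0 i *: p i.
have sum_continuous (V : normedModType R) (F : 'I_n -> 'rV[R]_n -> V) :
    (forall i, continuous (F i)) -> continuous (fun t => \sum_(i < n) F i t).
  by move=> F_cont; apply: continuous_big => //; exact: add_continuous.
have simplex_compact : compact simplex.
  apply: compact_closedI.
    exact: (@rV_compact R n (fun=> `[0, 1]) (fun=> @segment_compact R 0 1)).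
  apply: preimage_closed; last exact: closed_eq.
  by move=> x _; apply: sum_continuous => i; exact: coord_continuous.
suff -> : conv_hull p = comb @` simplex.
  apply: continuous_compact simplex_compact; apply: continuous_subspaceT.
  apply: sum_continuous => i x.
  by apply: continuousZr_tmp; exact: coord_continuous.
apply/seteqP; split.
- move=> x [t [t_ge0 [t_sum1 ->]]]; exists (\row_i t i).
    split; last by rewrite /= (eq_bigr t) // => i _; rewrite mxE.
    move=> i; rewrite mxE /= in_itv /= t_ge0 /= -t_sum1 (bigD1 i) //= lerDl.
    exact: sumr_ge0.
  by apply: eq_bigr => i _; rewrite mxE.
- move=> _ [t [t01 t_sum1] <-]; exists (fun i => t ord0 i); split; [|split] => //.
  by move=> i; have /andP[] := t01 i.
Qed.

End convex_hull.

Lemma conv_hull_eq_bigcup_Smap (R : realType) (d n : nat)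
    (p : 'I_n.+1 -> 'rV[R]_d) (lam : 'I_n.+1 -> R) :
  (forall i, 0 < lam i <= 1) -> \sum_(i < n.+1) (1 - lam i) <= 1 ->
  conv_hull p = \bigcup_(i in [set: 'I_n.+1]) (Smap (lam i) (p i) @` conv_hull p).
Proof.
move=> lam01 compl_sum; apply/seteqP; split; last first.
  move=> _ [i _ [x conv_x <-]]; apply: conv_hull_Smap conv_x.
  by case/andP: (lam01 i) => /ltW -> ->.
move=> _ [t [t_ge0 [t_sum1 ->]]].
have [i ti_ge] : exists i, 1 - lam i <= t i.
  by apply: exists_le_of_sum_le; rewrite t_sum1.
have /andP[lam_gt0 _] := lam01 i.
have [y conv_y ->] := conv_hull_Smap_inv p lam_gt0 t_ge0 t_sum1 ti_ge.
by exists i => //; exists y.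
Qed.

Theorem lemma2p3 (R : realType) (d : nat) (p : 'I_d.+1 -> 'rV[R]_d)
    (lam : 'I_d.+1 -> R) :
  not_in_hyperplane p ->
  (forall i, 0 < lam i < 1) ->
  d%:R <= \sum_(i < d.+1) lam i ->
  (* the convex hull is a non-empty compact invariant set ... *)
  (conv_hull p !=set0 /\ compact (conv_hull p) /\
   conv_hull p = \bigcup_(i in [set: 'I_d.+1]) (Smap (lam i) (p i) @` conv_hull p)) /\
  (* ... and every non-empty compact invariant set equals it *)
  (forall X : set 'rV[R]_d, X !=set0 -> compact X ->
     X = \bigcup_(i in [set: 'I_d.+1]) (Smap (lam i) (p i) @` X) ->
     X = conv_hull p).
Proof.
move=> _ lam01 lam_sum.
have lam_ge0 i : 0 <= lam i by case/andP: (lam01 i) => /ltW.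
have Smap_lip i x y :
    `|Smap (lam i) (p i) x - Smap (lam i) (p i) y| <= lam i * `|x - y|.
  by rewrite Smap_dist.
have conv_eq : conv_hull p =
    \bigcup_(i in [set: 'I_d.+1]) (Smap (lam i) (p i) @` conv_hull p).
  apply: conv_hull_eq_bigcup_Smap.
    by move=> i; case/andP: (lam01 i) => -> /ltW.
  by rewrite sumrB sumr_const card_ord -natr1; lra.
have conv_neq0 : conv_hull p !=set0 by exists (p ord0); exact: conv_hull_vertex.
have conv_compact : compact (conv_hull p) := conv_hull_compact (p := p).
split=> // X X_neq0 X_compact X_eq; apply/seteqP; split.
- apply: (self_covered_sub_invariant lam01 Smap_lip) => //.
  + exact: compact_closed.
  + by move=> i _ [x conv_x <-]; rewrite conv_eq; exists i => //; exists x.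
  + exact: compact_bounded.
  + by rewrite -X_eq.
- apply: (self_covered_sub_invariant lam01 Smap_lip) => //.
  + exact: compact_closed.
  + by move=> i _ [x Xx <-]; rewrite X_eq; exists i => //; exists x.
  + exact: compact_bounded.
  + by rewrite -conv_eq.
Qed.
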